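(* Let $p=2n+1$ be an odd prime, and write $\{1,\ldots,p-1\}=\{a_1,\ldots,a_n\}\cup\{b_1,\ldots,b_n\}$ with $a_1<\cdots<a_n$ and $b_1<\cdots<b_n$, where $a_1,\ldots,a_n$ are the quadratic residues modulo $p$ and $b_1,\ldots,b_n$ are the quadratic nonresidues modulo $p$ in $\{1,\ldots,p-1\}$. Then $$\prod_{1\le j<k\le n}(a_k-a_j)(b_k-b_j)\equiv\begin{cases}-n!\pmod p&\text{if } p\equiv1\pmod4,\\1\pmod p&\text{if } p\equiv3\pmod4.\end{cases}$$ *)

From mathcomp Require Import all_boot all_order all_algebra.
Set Implicit Arguments. Unset Strict Implicit. Unset Printing Implicit Defensive.
Import GRing.Theory Num.Theory.

Definition is_qr (p a : nat) : bool := [exists x : 'I_p, x ^ 2 == a %[mod p]].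

Definition qres (p : nat) : seq nat := [seq a <- iota 1 p.-1 | is_qr p a].
Definition qnres (p : nat) : seq nat := [seq a <- iota 1 p.-1 | ~~ is_qr p a].

From mathcomp Require Import all_boot all_order all_algebra.
From mathcomp Require Import finfield zify ring.
Set Implicit Arguments.
Unset Strict Implicit.
Unset Printing Implicit Defensive.

Import GRing.Theory.
Local Open Scope ring_scope.

(* By Euler's criterion the residues a_j are the roots of X^n - 1
   among the nonzero elements and the nonresidues b_j those of X^n + 1.  Split
   the Vandermonde product V of 1, ..., p - 1 along this partition:
   V = +-V(a) V(b) prod_(j,k) (b_k - a_j), and the cross product is
   ((-1)^n 2)^n since prod_k (a - b_k) = a^n + 1 = 2.  On the other hand
   V = prod_(k < p - 1) k!, and Wilson's theorem in the form
   (p - 1 - k)! k! = (-1)^(k + 1) gives V n! = (-1)^C(n, 2).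
   If n is odd, x |-> -x exchanges residues and nonresidues, so V(b) = V(a);
   then V(a)^4 = 1, and V(a)^2 = -1 is excluded because V(a)^(2n) = 1.
   If n = 2m, x |-> -x preserves residues, which makes the sign +1; Gauss's
   lemma gives 2^n n! = (-1)^m n!, and n!^2 = -1 yields V(a) V(b) = -n!. *)

Section Crossings.
Variable T : Type.
Implicit Types (P Q : pred T) (s : seq T).

Fixpoint crossings P s : nat :=
  if s is x :: s' then ((if P x then 0 else count P s') + crossings P s')%N else 0%N.

Lemma eq_crossings P Q : P =1 Q -> crossings P =1 crossings Q.
Proof. by move=> eqPQ; elim=> //= x s ->; rewrite eqPQ (eq_count eqPQ). Qed.

Lemma crossings_rcons P s x :
  crossings P (rcons s x) = (crossings P s + (if P x then count (predC P) s else 0))%N.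
Proof.
elim: s => [|y s IHs] /=; first by case: (P x).
by rewrite IHs -cats1 count_cat /= addn0; case: (P x); case: (P y) => /=; lia.
Qed.

Lemma crossings_rev P s : crossings P (rev s) = crossings (predC P) s.
Proof.
elim: s => //= x s IHs.
by rewrite rev_cons crossings_rcons IHs count_rev; case: (P x) => /=; lia.
Qed.

Lemma crossingsC P s :
  (crossings P s + crossings (predC P) s = count P s * count (predC P) s)%N.
Proof. by elim: s => //= x s; case: (P x) => /=; lia. Qed.

End Crossings.

Lemma crossings_map (T U : Type) (f : U -> T) (P : pred T) (s : seq U) :
  crossings P (map f s) = crossings (preim f P) s.
Proof. by elim: s => //= x s ->; rewrite count_map. Qed.

Section Vandermonde.
Variable R : comPzRingType.
Implicit Types s : seq R.

Fixpoint vdm s : R := if s is x :: s' then \prod_(y <- s') (y - x) * vdm s' else 1.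

Lemma vdmE s : vdm s = \prod_(k < size s) \prod_(j < k) (s`_k - s`_j).
Proof.
elim: s => [|x s IHs] /=; first by rewrite big_ord0.
rewrite big_ord_recl big_ord0 mul1r IHs (big_nth 0) big_mkord -big_split /=.
by apply: eq_bigr => k _; rewrite big_ord_recl.
Qed.

Lemma vdm_rcons s x : vdm (rcons s x) = vdm s * \prod_(y <- s) (x - y).
Proof.
elim: s => [|y s IHs] /=; first by rewrite !big_nil !mul1r.
by rewrite IHs big_rcons big_cons /=; ring.
Qed.

Lemma vdm_rev_opp s : vdm (rev (map -%R s)) = vdm s.
Proof.
elim: s => //= x s IHs.
rewrite rev_cons vdm_rcons IHs mulrC big_rev big_map.
by congr (_ * _); apply: eq_bigr => y _; rewrite opprK addrC.
Qed.

Lemma prodrN_seq (I : Type) (r : seq I) (P : pred I) (F : I -> R) :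
  \prod_(i <- r | P i) - F i = (-1) ^+ count P r * \prod_(i <- r | P i) F i.
Proof.
elim: r => [|i r IHr]; first by rewrite !big_nil mulr1.
by rewrite !big_cons IHr /=; case: (P i); rewrite ?exprS /=; ring.
Qed.

Lemma vdm_filter (P : pred R) s :
  vdm s = (-1) ^+ crossings P s * vdm (filter P s) * vdm (filter (predC P) s)
          * \prod_(x <- s | P x) \prod_(y <- s | ~~ P y) (y - x).
Proof.
elim: s => [|x s IHs] /=; first by rewrite big_nil !mulr1.
rewrite IHs big_cons (bigID P) /=; case: ifP => Px /=.
  under [X in _ = _ * (_ * X)]eq_bigr => y _ do rewrite big_cons Px.
  by rewrite big_cons Px /= big_filter; ring.
under [X in _ = _ * X]eq_bigr => y _ do rewrite big_cons Px.
rewrite big_split /= exprD big_filter.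
have -> : \prod_(y <- s | P y) (y - x) = (-1) ^+ count P s * \prod_(y <- s | P y) (x - y).
  by rewrite -prodrN_seq; apply: eq_bigr => y _; rewrite opprB.
ring.
Qed.

End Vandermonde.

Lemma rmorph_vdm (R S : comPzRingType) (f : {rmorphism R -> S}) s :
  f (vdm s) = vdm (map f s).
Proof.
elim: s => [|x s IHs] /=; first exact: rmorph1.
by rewrite rmorphM rmorph_prod IHs big_map; under eq_bigr do rewrite rmorphB.
Qed.

Lemma max_XnsubC_roots (F : fieldType) n (c : F) (rs : seq F) :
  (0 < n)%N -> uniq rs -> all (fun x => x ^+ n == c) rs -> (size rs <= n)%N.
Proof.
move=> n_gt0 uniq_rs rs_roots; rewrite -ltnS -(size_XnsubC c n_gt0).
apply: max_poly_roots uniq_rs; first by rewrite -size_poly_eq0 size_XnsubC.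
by apply/allP=> x /(allP rs_roots) /eqP xn; rewrite rootE !hornerE xn subrr.
Qed.

Section PrimeField.
Variable p : nat.
Hypothesis p_pr : prime p.
Local Notation F := 'F_p.

Lemma Fp_natr_eq0 k : ((k%:R : F) == 0) = (p %| k)%N.
Proof. by rewrite (dvdn_pcharf (pchar_Fp p_pr)). Qed.

Lemma Fp_natr_neq0 k : (0 < k < p)%N -> (k%:R : F) != 0.
Proof. by case/andP=> k_gt0 ltkp; rewrite Fp_natr_eq0; apply/negP => /dvdn_leq; lia. Qed.

Lemma Fp_natr_inj j k : (j < p)%N -> (k < p)%N -> (j%:R : F) = k%:R -> j = k.
Proof.
move=> ltjp ltkp eqjk; have := val_Fp_nat p_pr j.
by rewrite eqjk val_Fp_nat // !modn_small.
Qed.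

Lemma Fp_natrB k : (k <= p)%N -> ((p - k)%:R : F) = - k%:R.
Proof. by move=> lekp; rewrite natrB // pchar_Fp_0 // sub0r. Qed.

Lemma Fp_fermat (x : F) : x != 0 -> x ^+ p.-1 = 1.
Proof.
move=> x_neq0; apply: (mulfI x_neq0); rewrite -exprS prednK ?prime_gt0 //.
by rewrite mulr1; have := expf_card x; rewrite card_Fp.
Qed.

Lemma fact_reflect k : (k < p)%N -> ((p.-1 - k)`!%:R * k`!%:R : F) = (-1) ^+ k.+1.
Proof.
elim: k => [|k IHk] ltkp.
  apply/eqP; rewrite subn0 mulr1 expr1 -subr_eq0 opprK natr1 Fp_natr_eq0.
  by rewrite -Wilson ?prime_gt1.
rewrite exprS -IHk 1?ltnW // (_ : p.-1 - k = (p.-1 - k.+1).+1)%N; last by lia.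
rewrite (factS (p.-1 - k.+1)) (_ : (p.-1 - k.+1).+1 = p - k.+1)%N; last by lia.
by rewrite factS !natrM Fp_natrB 1?ltnW //; ring.
Qed.

End PrimeField.

Section QuadraticResidues.
Variables (p n : nat).
Hypotheses (p_pr : prime p) (p_eq : p = (2 * n + 1)%N).
Local Notation F := 'F_p.

Lemma n_gt0 : (0 < n)%N.
Proof. by move: (prime_gt1 p_pr); rewrite p_eq; lia. Qed.

Lemma pred_p : p.-1 = (2 * n)%N.
Proof. by rewrite p_eq addn1. Qed.

Lemma m1_neq1 : (-1 : F) != 1.
Proof.
rewrite eq_sym -addr_eq0 -mulr2n Fp_natr_eq0 //.
by apply/negP => /dvdn_leq; have := n_gt0; lia.
Qed.

Let Fx : seq F := [seq i%:R | i <- iota 1 p.-1].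

Lemma size_Fx : size Fx = (2 * n)%N.
Proof. by rewrite size_map size_iota pred_p. Qed.

Lemma Fx_neq0 x : x \in Fx -> x != 0.
Proof.
by case/mapP=> i; rewrite mem_iota pred_p => ? ->; apply: Fp_natr_neq0 => //; lia.
Qed.

Lemma uniq_Fx : uniq Fx.
Proof.
rewrite map_inj_in_uniq ?iota_uniq // => i j.
by rewrite !mem_iota pred_p => lti ltj /Fp_natr_inj; apply; lia.
Qed.

Lemma map_opp_Fx : map -%R Fx = rev Fx.
Proof.
apply: (@eq_from_nth _ 0); first by rewrite size_map size_rev.
move=> i; rewrite size_map size_Fx => lti.
rewrite nth_rev size_Fx // (nth_map 0) ?size_Fx // !(nth_map 0%N) ?size_iota ?pred_p; try lia.
by rewrite !nth_iota ?pred_p -?Fp_natrB; try lia; congr (_%:R); lia.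
Qed.

Lemma opp_in_Fx x : x \in Fx -> - x \in Fx.
Proof. by move=> Fx_x; rewrite -mem_rev -map_opp_Fx map_f. Qed.

Lemma unity_root_sqr (x : F) : x != 0 -> n.-unity_root (x ^+ 2).
Proof. by move=> x_neq0; rewrite unity_rootE -exprM -pred_p Fp_fermat. Qed.

Lemma not_unity_root_Fx x : x \in Fx -> ~~ n.-unity_root x = (x ^+ n == -1).
Proof.
move=> /Fx_neq0 x_neq0; rewrite unity_rootE.
have : (x ^+ n) ^+ 2 == 1 by rewrite -exprM mulnC -pred_p Fp_fermat.
by rewrite sqrf_eq1 => /orP [] /eqP ->; rewrite eqxx ?m1_neq1 // eq_sym (negbTE m1_neq1).
Qed.

Let sqrs : seq F := [seq i%:R ^+ 2 | i <- iota 1 n].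

Lemma uniq_sqrs : uniq sqrs.
Proof.
rewrite map_inj_in_uniq ?iota_uniq // => i j; rewrite !mem_iota => ltin ltjn /eqP.
rewrite -subr_eq0 subr_sqr mulf_eq0 subr_eq0 -natrD Fp_natr_eq0 // => /orP [].
  by move/eqP/Fp_natr_inj; apply; lia.
by move/dvdn_leq; lia.
Qed.

(* Euler's criterion.  Conversely, a nonresidue a with a^n = 1 would make a together
   with the n distinct squares 1^2, ..., n^2 too many roots of X^n - 1. *)
Lemma is_qrE a : (0 < a < p)%N -> is_qr p a = n.-unity_root (a%:R : F).
Proof.
move=> a_range; have a_neq0 := Fp_natr_neq0 p_pr a_range.
apply/idP/idP.
  case/existsP=> x /eqP xa.
  have ax : (a%:R : F) = x%:R ^+ 2 by rewrite -(Fp_nat_mod p_pr) -xa Fp_nat_mod // natrX.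
  rewrite ax unity_root_sqr //; apply: contraNneq a_neq0 => x0.
  by rewrite ax x0 expr0n.
apply: contraTT => not_qr; apply/negP => a_root.
have := @max_XnsubC_roots _ _ 1 (a%:R :: sqrs) n_gt0.
rewrite /= size_map size_iota ltnn uniq_sqrs andbT -unity_rootE a_root.
move=> /(_ _ _)/notF; apply.
  apply/mapP=> -[i]; rewrite mem_iota => /andP [i_gt0 ltin] ai.
  have ltip : (i < p)%N by lia.
  apply/negP: not_qr; rewrite negbK; apply/existsP; exists (Ordinal ltip); apply/eqP => /=.
  by rewrite -!(val_Fp_nat p_pr) natrX ai.
apply/allP=> x /mapP [i]; rewrite mem_iota => i_range ->.
by rewrite -unity_rootE unity_root_sqr // Fp_natr_neq0 //; lia.
Qed.

Let Q := filter n.-unity_root Fx.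
Let N := filter (predC n.-unity_root) Fx.

Lemma natr_qres : [seq k%:R | k <- qres p] = Q.
Proof.
rewrite /Q filter_map; congr map; apply: eq_in_filter => k.
by rewrite mem_iota => k_range; rewrite /= is_qrE //; lia.
Qed.

Lemma natr_qnres : [seq k%:R | k <- qnres p] = N.
Proof.
rewrite /N filter_map; congr map; apply: eq_in_filter => k.
by rewrite mem_iota => k_range; rewrite /= is_qrE //; lia.
Qed.

Lemma count_Fx_expr_le (c : F) : (count (fun x => x ^+ n == c) Fx <= n)%N.
Proof.
rewrite -size_filter; apply: (max_XnsubC_roots (c := c) n_gt0).
  exact: filter_uniq uniq_Fx.
by apply/allP=> x; rewrite mem_filter => /andP [].
Qed.

Lemma count_qr_Fx : count n.-unity_root Fx = n.
Proof.
have le_qr : (count n.-unity_root Fx <= n)%N.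
  by rewrite (eq_count (unity_rootE n)) count_Fx_expr_le.
have le_qnr : (count (predC n.-unity_root) Fx <= n)%N.
  by rewrite (eq_in_count not_unity_root_Fx) count_Fx_expr_le.
by have := count_predC n.-unity_root Fx; rewrite size_Fx; lia.
Qed.

Lemma count_qnr_Fx : count (predC n.-unity_root) Fx = n.
Proof. by have := count_predC n.-unity_root Fx; rewrite size_Fx count_qr_Fx; lia. Qed.

Lemma prod_sub_qnr (x : F) : \prod_(y <- N) (x - y) = x ^+ n + 1.
Proof.
have N_roots : all (root ('X^n - (-1)%:P)) N.
  apply/allP=> y; rewrite mem_filter => /andP [y_qnr Fx_y].
  by move: y_qnr; rewrite /= not_unity_root_Fx // rootE !hornerE => /eqP ->; rewrite subrr.
have := all_roots_prod_XsubC _ N_roots; rewrite uniq_rootsE filter_uniq ?uniq_Fx //.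
rewrite size_XnsubC ?n_gt0 // size_filter count_qnr_Fx lead_coefXnsubC ?n_gt0 // scale1r.
move=> /(_ erefl erefl) /(congr1 (horner^~ x)); rewrite horner_prod !hornerE opprK => ->.
by apply: eq_bigr => y _; rewrite hornerXsubC.
Qed.

Lemma prod_qr_qnr :
  \prod_(x <- Fx | n.-unity_root x) \prod_(y <- Fx | ~~ n.-unity_root y) (y - x)
    = ((-1) ^+ n * 2) ^+ n.
Proof.
rewrite -[X in _ = _ ^+ X]count_qr_Fx -iter_mulr_1 -big_const_seq.
apply: eq_bigr => x; rewrite unity_rootE => /eqP x_qr.
under eq_bigr do rewrite -opprB.
by rewrite prodrN_seq count_qnr_Fx -big_filter prod_sub_qnr x_qr -mulr2n.
Qed.

Lemma vdm_Fx : vdm Fx = \prod_(k < 2 * n) k`!%:R.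
Proof.
rewrite vdmE size_Fx; apply: eq_bigr => k _; rewrite -ffactnn ffact_prod natr_prod.
have ltk := ltn_ord k; apply: eq_bigr => j _; have ltjk := ltn_ord j.
rewrite !(nth_map 0%N) ?size_iota ?pred_p; try lia.
by rewrite !nth_iota ?pred_p -?natrB; try lia; congr _%:R; lia.
Qed.

(* Pair k! with (2n - 1 - k)! and apply [fact_reflect]. *)
Lemma vdm_Fx_fact : vdm Fx * n`!%:R = (-1) ^+ 'C(n, 2).
Proof.
rewrite vdm_Fx mul2n -addnn big_split_ord /= [X in _ * X * _](reindex_inj rev_ord_inj) /=.
rewrite fact_prod big_add1 /= big_mkord natr_prod -!big_split /=.
rewrite -bin2_sum big_mkord -prodrXr; apply: eq_bigr => i _; have lti := ltn_ord i.
have := fact_reflect p_pr (k := i.+1); rewrite pred_p.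
rewrite (_ : 2 * n - i.+1 = n + (n - i.+1))%N; last by lia.
have -> : (-1 : F) ^+ i = (-1) ^+ i.+2 by rewrite !exprS !mulN1r opprK.
by rewrite factS natrM => <-; [ring | lia].
Qed.

Lemma fact_sqr : (n`!%:R : F) ^+ 2 = (-1) ^+ n.+1.
Proof.
have := fact_reflect p_pr (k := n); rewrite pred_p (_ : 2 * n - n = n)%N; last by lia.
by rewrite expr2 => <- //; lia.
Qed.

Lemma fact_double k : (k.*2)`! = \prod_(i < k) (i.*2.+1 * i.*2.+2)%N.
Proof.
elim: k => [|k IHk]; first by rewrite big_ord0.
by rewrite big_ord_recr /= -IHk doubleS !factS; ring.
Qed.

(* Gauss's lemma for 2: the even numbers 2i > n are congruent to -(p - 2i). *)
Lemma two_expr_fact m : n = m.*2 -> (2 ^+ n * n`!%:R : F) = (-1) ^+ m * n`!%:R.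
Proof.
move=> n_eq; rewrite n_eq {1}fact_prod big_add1 /= big_mkord natr_prod.
rewrite -iter_mulr_1 -big_const_ord -big_split /=.
rewrite -addnn big_split_ord /= [X in _ * X](reindex_inj rev_ord_inj) /=.
under [X in _ * X = _]eq_bigr => i _.
  have lti := ltn_ord i; rewrite -natrM.
  rewrite (_ : 2 * (m + (m - i.+1)).+1 = p - i.*2.+1)%N ?Fp_natrB; try lia.
  over.
rewrite /= prodrN card_ord addnn fact_double natr_prod mulrCA -big_split /=.
congr (_ * _); apply: eq_bigr => i _.
by rewrite -!natrM; congr _%:R; lia.
Qed.

Lemma crossings_Fx_even m : n = m.*2 -> ~~ odd (crossings n.-unity_root Fx).
Proof.
move=> n_eq.
have sym : crossings n.-unity_root Fx = crossings (predC n.-unity_root) Fx.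
  rewrite -{1}(revK Fx) -map_opp_Fx crossings_rev crossings_map.
  apply: eq_crossings => x /=.
  by rewrite !unity_rootE exprNn -signr_odd n_eq odd_double mul1r.
have := crossingsC n.-unity_root Fx.
rewrite count_qr_Fx count_qnr_Fx -sym addnn n_eq -doubleMl => /double_inj ->.
by rewrite oddM odd_double andbF.
Qed.

Lemma qnr_rev_opp_qr : odd n -> N = rev (map -%R Q).
Proof.
move=> n_odd; rewrite /N -{1}(revK Fx) -map_opp_Fx filter_rev filter_map.
congr (rev (map _ _)); apply: eq_in_filter => x Fx_x /=.
rewrite not_unity_root_Fx ?opp_in_Fx // unity_rootE exprNn -signr_odd n_odd.
by rewrite mulN1r eqr_opp.
Qed.

Lemma vdm_qr_qnr_odd : odd n -> vdm Q * vdm N = 1.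
Proof.
move=> n_odd; rewrite qnr_rev_opp_qr // vdm_rev_opp.
have vdm_Fx_sqr : vdm Fx ^+ 2 = 1.
  have := congr1 (fun y => y ^+ 2) vdm_Fx_fact; rewrite /= sqrr_sign exprMn fact_sqr.
  by rewrite -signr_odd /= n_odd mulr1.
have two_neq0 : (2 : F) != 0 by apply: Fp_natr_neq0 => //; rewrite p_eq; have := n_gt0; lia.
have cross_sqr : (((-1) ^+ n * 2) ^+ n) ^+ 2 = 1 :> F.
  by rewrite -exprM mulnC -pred_p Fp_fermat // mulf_neq0 ?signr_eq0.
have := vdm_filter n.-unity_root Fx; rewrite prod_qr_qnr -/Q -/N qnr_rev_opp_qr // vdm_rev_opp.
move=> /(congr1 (fun y => y ^+ 2)) /=; rewrite vdm_Fx_sqr 3!exprMn sqrr_sign cross_sqr.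
rewrite mul1r mulr1 -exprMn => /esym /eqP; rewrite sqrf_eq1 => /orP [/eqP // | /eqP A2].
have A_neq0 : vdm Q != 0.
  by apply/eqP=> A0; move/eqP: A2; rewrite A0 mul0r eq_sym oppr_eq0 oner_eq0.
have := Fp_fermat p_pr A_neq0; rewrite pred_p exprM expr2 A2 -signr_odd n_odd => /eqP.
by rewrite (negbTE m1_neq1).
Qed.

Lemma vdm_qr_qnr_even m : n = m.*2 -> vdm Q * vdm N = - n`!%:R.
Proof.
move=> n_eq.
have sign_n : (-1 : F) ^+ n = 1 by rewrite -signr_odd n_eq odd_double.
have sign_bin2 : (-1 : F) ^+ 'C(n, 2) = (-1) ^+ m.
  have odd_bin2 : odd 'C(n, 2) = odd m.
    rewrite bin2 n_eq -doubleMl half_double oddM.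
    by case: m {n_eq} => //= m; rewrite odd_double andbT.
  by rewrite -[LHS]signr_odd odd_bin2 signr_odd.
have split := vdm_filter n.-unity_root Fx.
rewrite prod_qr_qnr -signr_odd (negbTE (crossings_Fx_even n_eq)) in split.
rewrite sign_n !mul1r -/Q -/N in split.
have x_fact : vdm Q * vdm N * n`!%:R = 1.
  have := vdm_Fx_fact; rewrite split sign_bin2 -(mulrA (vdm Q * vdm N)).
  rewrite (two_expr_fact n_eq) => e.
  apply: (@mulfI _ ((-1) ^+ m)); first by rewrite signr_eq0.
  by rewrite mulr1 -[RHS]e mulrCA.
have fact_sqr_even : (n`!%:R : F) ^+ 2 = -1 by rewrite fact_sqr exprS sign_n mulr1.
transitivity (- (vdm Q * vdm N * n`!%:R) * n`!%:R); last by rewrite x_fact mulN1r.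
by rewrite mulNr -(mulrA (vdm Q * vdm N)) -expr2 fact_sqr_even mulrN1 opprK.
Qed.

Lemma size_qres : size (qres p) = n.
Proof. by rewrite -(size_map (fun k => k%:R : F)) natr_qres size_filter count_qr_Fx. Qed.

Lemma size_qnres : size (qnres p) = n.
Proof. by rewrite -(size_map (fun k => k%:R : F)) natr_qnres size_filter count_qnr_Fx. Qed.

Lemma vdm_qres_qnres :
  vdm [seq k%:R | k <- qres p] * vdm [seq k%:R | k <- qnres p]
    = (if odd n then 1 else - n`!%:R) :> F.
Proof.
rewrite natr_qres natr_qnres; case: ifP => [n_odd | /negbT n_even].
  exact: vdm_qr_qnr_odd.
by apply: (vdm_qr_qnr_even (m := n./2)); rewrite -[LHS]odd_double_half (negbTE n_even).
Qed.

End QuadraticResidues.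

Theorem corollary3p1 (p n : nat) (hp : prime p) (hpn : p = (2 * n + 1)%N) :
  let a := fun i : nat => (nth 0%N (qres p) i)%:Z in
  let b := fun i : nat => (nth 0%N (qnres p) i)%:Z in
  ((\prod_(k < n) \prod_(j < k) ((a k - a j) * (b k - b j)))
    = (if p %% 4 == 1 then - (n`!)%:Z else 1) %[mod p])%Z.
Proof.
move=> a b.
have -> : \prod_(k < n) \prod_(j < k) ((a k - a j) * (b k - b j))
          = vdm [seq k%:Z | k <- qres p] * vdm [seq k%:Z | k <- qnres p].
  rewrite !vdmE !size_map (size_qres hp hpn) (size_qnres hp hpn) -big_split.
  apply: eq_bigr => k _; rewrite -big_split; apply: eq_bigr => j _.
  have [ltjk ltkn] := (ltn_ord j, ltn_ord k).
  by rewrite !(nth_map 0%N) ?(size_qres hp hpn) ?(size_qnres hp hpn) //; lia.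
have p_mod4 : ((p%:Z %% 4)%Z == 1) = ~~ odd n.
  rewrite modz_nat eqz_nat hpn; have := odd_double_half n.
  by case: (odd n) => /= e; apply/eqP; lia.
rewrite p_mod4; apply/eqP; rewrite eqz_mod_dvd (dvdz_pcharf (pchar_Fp hp)).
rewrite rmorphB rmorphM /= !rmorph_vdm -!map_comp (vdm_qres_qnres hp hpn) subr_eq0.
by case: ifP => _; rewrite ?rmorph1 ?rmorphN.
Qed.
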